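(* For every $n\ge0$, $Inn_l(Q_n)=Inn_r(Q_n)$, and $Inn(Q_n)=\langle T_x,\ L_{x,y}\mid x,y\in Q_n\rangle$.
   Context: Cayley--Dickson loops: $Q_0=\{1,-1\}\subset\mathbb{R}$ with conjugation $x^*=x$. For $n\ge1$, $Q_n=\{(x,0),(x,1)\mid x\in Q_{n-1}\}$ with multiplication $(x,0)(y,0)=(xy,0)$, $(x,0)(y,1)=(yx,1)$, $(x,1)(y,0)=(xy^*,1)$, $(x,1)(y,1)=(-y^*x,0)$ and conjugation $(x,0)^*=(x^*,0)$, $(x,1)^*=(-x,1)$, where $-(x,a)=(-x,a)$. $Q_n$ is a loop with neutral element $1=(1,0,\dots,0)$. For a loop $Q$: $L_x(a)=xa$, $R_x(a)=ax$, $T_x=L_x^{-1}R_x$, $L_{x,y}=L_{yx}^{-1}L_yL_x$, $R_{x,y}=R_{xy}^{-1}R_yR_x$; $Mlt(Q)=\langle L_x,R_x\rangle$, $Mlt_l(Q)=\langle L_x\rangle$, $Mlt_r(Q)=\langle R_x\rangle$, and $Inn(Q)$, $Inn_l(Q)$, $Inn_r(Q)$ are the stabilizers of $1$ in these groups respectively. *)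

From HB Require Import structures.
From mathcomp Require Import all_boot all_order all_fingroup.
Set Implicit Arguments. Unset Strict Implicit. Unset Printing Implicit Defensive.

(* Raw representation of an element of Q_n: (s, [:: a_n; ...; a_1]) where the
   sign s is true for -1, and a_n is the outermost Cayley--Dickson bit, i.e.
   (x, a_n) with x = (s, [:: a_(n-1); ...; a_1]) in Q_(n-1). *)
Definition raw := (bool * seq bool)%type.

(* conjugation: (x,0)^* = (x^*,0), (x,1)^* = (-x,1), and x^* = x in Q_0 *)
Fixpoint cconj (s : bool) (u : seq bool) : raw :=
  match u with
  | [::] => (s, [::])
  | false :: u' => let r := cconj s u' in (r.1, false :: r.2)
  | true :: u' => (~~ s, true :: u')
  end.

Definition rconj (x : raw) : raw := cconj x.1 x.2.
Definition rtail (x : raw) : raw := (x.1, behead x.2).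
Definition rbit (x : raw) : bool := head false x.2.

Fixpoint cmul (n : nat) (x y : raw) : raw :=
  match n with
  | 0 => (addb x.1 y.1, [::])
  | n'.+1 =>
    let x' := rtail x in let y' := rtail y in
    match rbit x, rbit y with
    | false, false => let r := cmul n' x' y' in (r.1, false :: r.2)
    | false, true  => let r := cmul n' y' x' in (r.1, true :: r.2)
    | true,  false => let r := cmul n' x' (rconj y') in (r.1, true :: r.2)
    | true,  true  => let r := cmul n' (rconj y') x' in (~~ r.1, false :: r.2)
    end
  end.

Definition Q (n : nat) : finType := (bool * n.-tuple bool)%type.

Definition qmul (n : nat) (x y : Q n) : Q n :=
  let r := cmul n (x.1, val x.2) (y.1, val y.2) in
  (r.1, [tuple nth false r.2 i | i < n]).

Definition qone (n : nat) : Q n := (false, [tuple false | i < n]).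

(* The left / right translations, as permutations of Q n.  Since Q n is a
   loop they are bijections, so the picked permutation is exactly L_x (resp.
   R_x); the default 1 is never used. *)
Definition Lp (n : nat) (x : Q n) : {perm Q n} :=
  odflt 1%g [pick p : {perm Q n} | [forall a, p a == qmul x a]].
Definition Rp (n : nat) (x : Q n) : {perm Q n} :=
  odflt 1%g [pick p : {perm Q n} | [forall a, p a == qmul a x]].

Local Open Scope group_scope.

(* NB: in mathcomp, (p * q) a = q (p a) (p is applied first). *)
(* T_x = L_x^{-1} R_x *)
Definition Tp (n : nat) (x : Q n) : {perm Q n} := Rp x * (Lp x)^-1.
(* L_{x,y} = L_{yx}^{-1} L_y L_x *)
Definition Lxy (n : nat) (x y : Q n) : {perm Q n} :=
  Lp x * Lp y * (Lp (qmul y x))^-1.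
(* R_{x,y} = R_{xy}^{-1} R_y R_x *)
Definition Rxy (n : nat) (x y : Q n) : {perm Q n} :=
  Rp x * Rp y * (Rp (qmul x y))^-1.

Definition Mlt (n : nat) : {set {perm Q n}} :=
  <<[set Lp x | x : Q n] :|: [set Rp x | x : Q n]>>.
Definition Mlt_l (n : nat) : {set {perm Q n}} := <<[set Lp x | x : Q n]>>.
Definition Mlt_r (n : nat) : {set {perm Q n}} := <<[set Rp x | x : Q n]>>.

Definition Inn (n : nat) : {set {perm Q n}} := [set p in Mlt n | p (qone n) == qone n].
Definition Inn_l (n : nat) : {set {perm Q n}} := [set p in Mlt_l n | p (qone n) == qone n].
Definition Inn_r (n : nat) : {set {perm Q n}} := [set p in Mlt_r n | p (qone n) == qone n].

(* Every element of Q_n is a signed basis unit +-e_u, u a word of n bits, and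
   e_u e_v = (-1)^(mul_sign u v) e_(u xor v).  The proof has three layers.

   1. Permutation groups: if a group <<A>> is covered by <<S>> * M, where M is
      a transversal {M y} with M y e = y, M e = 1, and S fixes e, then the
      stabilizer of e in <<A>> is exactly <<S>> (lemma stab_generated).
   2. Any finite loop: with the factorizations L_z L_x = L_{z,x} L_{xz},
      R_z R_x = R_{z,x} R_{zx} and L_z R_x = T_z^-1 R_{z,x} T_{zx} L_{zx},
      layer 1 gives Inn_l = <L_{x,y}>, Inn_r = <R_{x,y}> and
      Inn = <T_x, L_{x,y}, R_{x,y}>.
   3. The loop Q_n: products of units are computed by their sign and bit
      word, conjugation reverses products, hence the associator sign of
      (e_u, e_v, e_w) equals that of (e_w, e_v, e_u).  It follows that
      L_{x,y} and R_{x,y} both map a to the same +-a, so L_{x,y} = R_{x,y},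
      and the theorem is layer 2 specialized to Q_n. *)
From mathcomp Require Import all_boot all_order all_fingroup.
Set Implicit Arguments. Unset Strict Implicit. Unset Printing Implicit Defensive.

Local Open Scope group_scope.

(* A set X containing 1 and stable under right multiplication by the elements
   of A contains <<A>>: each a in A fixes X in the right coset action. *)
Lemma gen_sub_rstable (gT : finGroupType) (A X : {set gT}) :
  1 \in X -> (forall a, a \in A -> X :* a \subset X) -> <<A>> \subset X.
Proof.
move=> X1 stabX.
have sAstab : A \subset 'C[X | 'Rs].
  apply/subsetP => a Aa; apply/astab1P/eqP.
  by rewrite /= rcosetE eqEcard stabX //= card_rcoset leqnn.
apply/subsetP => g /(subsetP (genS sAstab)); rewrite genGid => /astab1P /= XgX.
by rewrite -XgX rcosetE mem_rcoset mulgV.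
Qed.

(* If M is a family of permutations
   with M e = 1 and M y e = y, the generators S fix e and lie in <<A>>, and
   <<S>> * M is stable under right multiplication by A, then <<S>> is the full
   stabilizer of e in <<A>>: every p in <<A>> is h * M z with h in <<S>>, and
   p e = e forces z = e. *)
Lemma stab_generated (T : finType) (e : T) (M : T -> {perm T})
    (A S : {set {perm T}}) :
  M e = 1 -> (forall y, M y e = y) ->
  S \subset <<A>> -> S \subset 'C[e | 'P] ->
  (forall a y, a \in A -> M y * a \in <<S>> * [set M z | z : T]) ->
  [set p in <<A>> | p e == e] = <<S>>.
Proof.
move=> Me1 Mye sSA sSe transvA.
have fixS : {in <<S>>, forall p : {perm T}, p e = e}.
  have sSGe : <<S>> \subset 'C[e | 'P] by rewrite gen_subG.
  by move=> p /(subsetP sSGe)/astab1P.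
apply/eqP; rewrite eqEsubset; apply/andP; split; last first.
  apply/subsetP => p Sp; rewrite inE (subsetP _ p Sp) ?gen_subG //=.
  by rewrite fixS.
have sAX : <<A>> \subset <<S>> * [set M z | z : T].
  apply: gen_sub_rstable => [|a Aa]; first by rewrite -(mulg1 1) mem_mulg // -Me1 imset_f.
  apply/subsetP => _ /rcosetP[_ /mulsgP[h _ Sh /imsetP[y _ ->] ->] ->].
  rewrite -mulgA; have /mulsgP[h' m Sh' Mm ->] := transvA a y Aa.
  by rewrite mulgA mem_mulg ?groupM.
apply/subsetP => p; rewrite inE => /andP[/(subsetP sAX)/mulsgP[h _ Sh /imsetP[z _ ->] ->] /eqP pe].
suff ze : z = e by rewrite ze Me1 mulg1.
by move: pe; rewrite permM fixS // Mye.
Qed.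

Section InnerMappingGroup.
Variables (T : finType) (e : T) (mul : T -> T -> T) (L R : T -> {perm T}).
Hypotheses (LE : forall x a, L x a = mul x a) (RE : forall x a, R x a = mul a x).
Hypotheses (mul1x : left_id e mul) (mulx1 : right_id e mul).

Definition left_inner (x y : T) : {perm T} := L x * L y * (L (mul y x))^-1.
Definition right_inner (x y : T) : {perm T} := R x * R y * (R (mul x y))^-1.
Definition middle_inner (x : T) : {perm T} := R x * (L x)^-1.

(* Both families of translations are transversals for the stabilizer of e. *)
Lemma L_neutral : L e = 1. Proof. by apply/permP => a; rewrite LE mul1x perm1. Qed.
Lemma R_neutral : R e = 1. Proof. by apply/permP => a; rewrite RE mulx1 perm1. Qed.
Lemma L_at_neutral (y : T) : L y e = y. Proof. by rewrite LE mulx1. Qed.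
Lemma R_at_neutral (y : T) : R y e = y. Proof. by rewrite RE mul1x. Qed.

(* q p^-1 fixes e as soon as p and q agree at e; all inner mappings are of
   this form. *)
Lemma quotient_stab (p q : {perm T}) : q e = p e -> q * p^-1 \in 'C[e | 'P].
Proof. by move=> qe; apply/astab1P; rewrite /= apermE permM qe permK. Qed.

Lemma left_inner_stab x y : left_inner x y \in 'C[e | 'P].
Proof. by apply: quotient_stab; rewrite permM !L_at_neutral LE. Qed.

Lemma right_inner_stab x y : right_inner x y \in 'C[e | 'P].
Proof. by apply: quotient_stab; rewrite permM !R_at_neutral RE. Qed.

Lemma middle_inner_stab x : middle_inner x \in 'C[e | 'P].
Proof. by apply: quotient_stab; rewrite L_at_neutral R_at_neutral. Qed.

Lemma LL_decomp z x : L z * L x = left_inner z x * L (mul x z).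
Proof. by rewrite mulgKV. Qed.

Lemma RR_decomp z x : R z * R x = right_inner z x * R (mul z x).
Proof. by rewrite mulgKV. Qed.

Lemma LR_decomp z x :
  L z * R x = (middle_inner z)^-1 * right_inner z x * middle_inner (mul z x) * L (mul z x).
Proof. by rewrite invMg invgK !mulgA mulgKV mulgKV mulgKV. Qed.

Let Ls := [set L x | x : T].
Let Rs := [set R x | x : T].
Let LIs := [set left_inner x y | x : T, y : T].
Let RIs := [set right_inner x y | x : T, y : T].
Let MIs := [set middle_inner x | x : T].

Theorem inn_left_gen : [set p in <<Ls>> | p e == e] = <<LIs>>.
Proof.
apply: stab_generated L_neutral L_at_neutral _ _ _.
- apply/subsetP => _ /imset2P[x y _ _ ->].
  by rewrite !groupM ?groupV // mem_gen ?imset_f.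
- by apply/subsetP => _ /imset2P[x y _ _ ->]; apply: left_inner_stab.
- move=> _ z /imsetP[x _ ->]; rewrite LL_decomp mem_mulg ?imset_f //.
  by rewrite mem_gen ?imset2_f.
Qed.

Theorem inn_right_gen : [set p in <<Rs>> | p e == e] = <<RIs>>.
Proof.
apply: stab_generated R_neutral R_at_neutral _ _ _.
- apply/subsetP => _ /imset2P[x y _ _ ->].
  by rewrite !groupM ?groupV // mem_gen ?imset_f.
- by apply/subsetP => _ /imset2P[x y _ _ ->]; apply: right_inner_stab.
- move=> _ z /imsetP[x _ ->]; rewrite RR_decomp mem_mulg ?imset_f //.
  by rewrite mem_gen ?imset2_f.
Qed.

Theorem inn_gen : [set p in <<Ls :|: Rs>> | p e == e] = <<MIs :|: LIs :|: RIs>>.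
Proof.
have Lgen x : L x \in <<Ls :|: Rs>> by rewrite mem_gen // inE imset_f.
have Rgen x : R x \in <<Ls :|: Rs>> by rewrite mem_gen // inE imset_f ?orbT.
have MIgen x : middle_inner x \in <<MIs :|: LIs :|: RIs>>.
  by rewrite mem_gen // !inE /MIs imset_f.
have LIgen x y : left_inner x y \in <<MIs :|: LIs :|: RIs>>.
  by rewrite mem_gen // !inE /LIs imset2_f ?orbT.
have RIgen x y : right_inner x y \in <<MIs :|: LIs :|: RIs>>.
  by rewrite mem_gen // !inE /RIs imset2_f ?orbT.
apply: stab_generated L_neutral L_at_neutral _ _ _.
- apply/subsetP => p /setUP[/setUP[] |].
  + by case/imsetP => x _ ->; rewrite groupM ?groupV ?Lgen ?Rgen.
  + by case/imset2P => x y _ _ ->; rewrite !groupM ?groupV ?Lgen ?Rgen.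
  + by case/imset2P => x y _ _ ->; rewrite !groupM ?groupV ?Lgen ?Rgen.
- apply/subsetP => p /setUP[/setUP[] |].
  + by case/imsetP => x _ ->; apply: middle_inner_stab.
  + by case/imset2P => x y _ _ ->; apply: left_inner_stab.
  + by case/imset2P => x y _ _ ->; apply: right_inner_stab.
- move=> _ z /setUP[] /imsetP[x _ ->].
  + by rewrite LL_decomp mem_mulg ?imset_f ?LIgen.
  + rewrite LR_decomp mem_mulg ?imset_f // groupM ?MIgen // groupM ?RIgen //.
    by rewrite groupV MIgen.
Qed.

End InnerMappingGroup.

(* Signs of the basis units of Q_n, the element (false, u) being the unit e_u:
   e_u^* = (-1)^(conj_sign u) e_u and e_u e_v = (-1)^(mul_sign n u v) e_w,
   where w = xorl u v is the bitwise sum of the words u and v. *)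
Definition conj_sign (u : seq bool) : bool := (cconj false u).1.

Definition mul_sign (n : nat) (u v : seq bool) : bool := (cmul n (false, u) (false, v)).1.

Definition xorl (u v : seq bool) : seq bool := [seq p.1 (+) p.2 | p <- zip u v].

Ltac bool_cases :=
  repeat match goal with
  | |- context [(cmul ?k ?x ?y).1] => case: (cmul k x y).1
  | |- context [conj_sign ?u] => case: (conj_sign u)
  | |- context [mul_sign ?k ?u ?v] => case: (mul_sign k u v)
  | b : bool |- _ => case: b
  end.

Lemma rconjE s u : rconj (s, u) = (s (+) conj_sign u, u).
Proof.
rewrite /rconj /conj_sign /=; elim: u s => [|[] u IH] s /=; first by rewrite addbF.
  by rewrite addbT.
by rewrite IH (IH false).
Qed.

Lemma cmul_sign n s u t v :
  (cmul n (s, u) (t, v)).1 = s (+) t (+) mul_sign n u v.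
Proof.
rewrite /mul_sign; elim: n s u t v => [|n IH] s u t v /=; first by rewrite addbF.
rewrite /rbit /rtail /=.
case: (head false u); case: (head false v); rewrite /= ?rconjE.
- by rewrite (IH (t (+) _)) (IH (false (+) _)); bool_cases.
- by rewrite (IH s) (IH false _ (false (+) _)); bool_cases.
- by rewrite (IH t) (IH false); bool_cases.
- by rewrite (IH s); bool_cases.
Qed.

Lemma xorl_cons a u b v : xorl (a :: u) (b :: v) = a (+) b :: xorl u v.
Proof. by []. Qed.

Lemma xorlC u v : xorl u v = xorl v u.
Proof. by elim: u v => [|a u IH] [|b v] //=; rewrite !xorl_cons addbC IH. Qed.

Lemma xorlA u v w : xorl (xorl u v) w = xorl u (xorl v w).
Proof. by elim: u v w => [|a u IH] [|b v] [|c w] //=; rewrite !xorl_cons addbA IH. Qed.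

Lemma xorlK u v : size u = size v -> xorl u (xorl u v) = v.
Proof.
by elim: u v => [|a u IH] [|b v] // [] /IH eq_uv; rewrite !xorl_cons addKb eq_uv.
Qed.

Lemma xorl0 u v : all negb u -> size u = size v -> xorl u v = v.
Proof.
elim: u v => [|a u IH] [|b v] // /andP[/negbTE a0 /IH{}IH] [] /IH eq_uv.
by rewrite xorl_cons a0 eq_uv.
Qed.

Lemma size_xorl u v : size (xorl u v) = minn (size u) (size v).
Proof. by rewrite size_map size_zip. Qed.

Lemma cmul_bits n s u t v : size u = n -> size v = n ->
  (cmul n (s, u) (t, v)).2 = xorl u v.
Proof.
elim: n s u t v => [|n IH] s [|a u] t [|b v] //= [Hu] [Hv].
rewrite /rbit /rtail /=.
by case: a; case: b; rewrite /= ?rconjE xorl_cons IH // xorlC.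
Qed.

(* Conjugation reverses products, (e_u e_v)^* = e_v^* e_u^*, read on signs. *)
Lemma cmul_conj_sign n u v : size u = n -> size v = n ->
  mul_sign n u v (+) conj_sign (xorl u v) =
  conj_sign u (+) conj_sign v (+) mul_sign n v u.
Proof.
rewrite /mul_sign; elim: n u v => [|n IH] [|a u] [|b v] //= [Hu] [Hv].
rewrite /rbit /rtail /= /conj_sign /= -!/(conj_sign _).
have IHuv := IH u v Hu Hv; have IHvu := IH v u Hv Hu; rewrite xorlC in IHvu.
case: a; case: b; rewrite /= ?rconjE /= -/(xorl u v).
- rewrite (cmul_sign n (conj_sign v)) (cmul_sign n (conj_sign u)) /mul_sign.
  by move: IHvu; bool_cases.
- by rewrite (cmul_sign n false u (conj_sign v)) /mul_sign; bool_cases.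
- by rewrite (cmul_sign n false v (conj_sign u)) /mul_sign; bool_cases.
- exact: IHuv.
Qed.

Lemma conj_sign0 u : all negb u -> conj_sign u = false.
Proof. by elim: u => [|[] u IH] //= /IH. Qed.

Lemma cmul_sign0 n u v : all negb u ->
  mul_sign n u v = false /\ mul_sign n v u = false.
Proof.
rewrite /mul_sign; elim: n u v => [|n IH] u v //= u0; rewrite /rbit /rtail /=.
have [-> u'0] : head false u = false /\ all negb (behead u).
  by case: u u0 => //= a u /andP[/negbTE ->].
have [-> ->] := IH _ (behead v) u'0.
by case: (head false v); rewrite //= rconjE cmul_sign conj_sign0 // /mul_sign (proj2 (IH _ _ u'0)).
Qed.

Section ElementsOfQn.
Variable n : nat.
Implicit Types (x y z a : Q n) (u v w : n.-tuple bool).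

Definition txor u v : n.-tuple bool := [tuple nth false (xorl u v) i | i < n].

Lemma val_txor u v : val (txor u v) = xorl u v.
Proof.
apply: (@eq_from_nth _ false); first by rewrite size_tuple size_xorl !size_tuple minnn.
move=> i; rewrite size_tuple => lt_i_n.
by rewrite -[i]/(nat_of_ord (Ordinal lt_i_n)) nth_mktuple.
Qed.

Lemma txorC u v : txor u v = txor v u.
Proof. by apply: val_inj; rewrite !val_txor xorlC. Qed.

Lemma txorA u v w : txor (txor u v) w = txor u (txor v w).
Proof. by apply: val_inj; rewrite !val_txor xorlA. Qed.

Lemma txorK u v : txor u (txor u v) = v.
Proof. by apply: val_inj; rewrite !val_txor xorlK // !size_tuple. Qed.

Lemma qmulE x y : qmul x y = (x.1 (+) y.1 (+) mul_sign n x.2 y.2, txor x.2 y.2).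
Proof. by rewrite /qmul /= cmul_sign cmul_bits ?size_tuple. Qed.

Lemma mul_sign_rev u v :
  mul_sign n u v = conj_sign u (+) conj_sign v (+) conj_sign (txor u v) (+) mul_sign n v u.
Proof.
have := cmul_conj_sign (size_tuple u) (size_tuple v); rewrite -val_txor.
by bool_cases.
Qed.

Lemma qone_bits : all negb (val (qone n).2).
Proof. by apply/allP => b /mapP[i _ ->]. Qed.

Lemma qmul1x : left_id (qone n) (@qmul n).
Proof.
move=> [s u]; rewrite qmulE (proj1 (cmul_sign0 n u qone_bits)) addbF.
by congr pair; apply: val_inj; rewrite val_txor xorl0 ?qone_bits ?size_tuple.
Qed.

Lemma qmulx1 : right_id (qone n) (@qmul n).
Proof.
move=> [s u]; rewrite qmulE (proj2 (cmul_sign0 n u qone_bits)) !addbF.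
by congr pair; apply: val_inj; rewrite val_txor xorlC xorl0 ?qone_bits ?size_tuple.
Qed.

Lemma qmulI x : injective (qmul x).
Proof.
move=> [s u] [t v]; rewrite !qmulE => /pair_equal_spec[+ eq_xu].
have <- : u = v by rewrite -(txorK x.2 u) eq_xu txorK.
by move=> /= /addIb/addbI ->.
Qed.

Lemma qmulIr x : injective (fun a : Q n => qmul a x).
Proof.
move=> [s u] [t v]; rewrite !qmulE => /pair_equal_spec[+ /= eq_ux].
have <- : u = v by rewrite -(txorK x.2 u) (txorC x.2 u) eq_ux (txorC v) txorK.
by move=> /= /addIb/addIb ->.
Qed.

Lemma LpE x a : Lp x a = qmul x a.
Proof.
rewrite /Lp; case: pickP => [p /forallP /(_ a) /eqP // | no_perm].
by case/negP: (no_perm (perm (@qmulI x))); apply/forallP => b; rewrite permE.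
Qed.

Lemma RpE x a : Rp x a = qmul a x.
Proof.
rewrite /Rp; case: pickP => [p /forallP /(_ a) /eqP // | no_perm].
by case/negP: (no_perm (perm (@qmulIr x))); apply/forallP => b; rewrite permE.
Qed.

End ElementsOfQn.

Section AssociatorOfQn.
Variable n : nat.
Implicit Types (x y z a : Q n) (u v w : n.-tuple bool).

Definition qflip (b : bool) x : Q n := (x.1 (+) b, x.2).

(* (e_u e_v) e_w = (-1)^(assoc_sign u v w) e_u (e_v e_w). *)
Definition assoc_sign u v w : bool :=
  mul_sign n u v (+) mul_sign n (txor u v) w (+) mul_sign n v w (+) mul_sign n u (txor v w).

Lemma qflipK b : involutive (qflip b).
Proof. by move=> [s u]; rewrite /qflip /= addbK. Qed.

Lemma qmul_flipl b x y : qmul (qflip b x) y = qflip b (qmul x y).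
Proof. by case: x y => [[] u] [[] v]; rewrite !qmulE /qflip /=; congr pair; bool_cases. Qed.

Lemma qmul_flipr b x y : qmul x (qflip b y) = qflip b (qmul x y).
Proof. by case: x y => [[] u] [[] v]; rewrite !qmulE /qflip /=; congr pair; bool_cases. Qed.

Lemma qmul_assoc_sign x y z :
  qmul (qmul x y) z = qflip (assoc_sign x.2 y.2 z.2) (qmul x (qmul y z)).
Proof.
by case: x y z => [[] u] [[] v] [[] w];
  rewrite !qmulE /qflip /= txorA /assoc_sign; congr pair; bool_cases.
Qed.

(* Conjugating (e_u e_v) e_w = +- e_u (e_v e_w) yields the same sign for
   (e_w e_v) e_u: the associator sign is invariant under reversal. *)
Lemma assoc_sign_rev u v w : assoc_sign u v w = assoc_sign w v u.
Proof.
rewrite /assoc_sign (mul_sign_rev u v) (mul_sign_rev (txor u v) w).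
rewrite (mul_sign_rev v w) (mul_sign_rev u (txor v w)).
by rewrite txorA (txorC w v) (txorC v u); bool_cases.
Qed.

End AssociatorOfQn.

(* In Q n, L_{x,y} = R_{x,y}: both send a to c = +-a, since
   y(xa) = (yx)c and (ax)y = c(xy) for the same sign, by assoc_sign_rev. *)
Lemma Lxy_Rxy (n : nat) (x y : Q n) : Lxy x y = Rxy x y.
Proof.
apply/permP => a; rewrite /Lxy /Rxy !permM !LpE !RpE.
pose c := qflip (assoc_sign y.2 x.2 a.2) a.
have -> : qmul y (qmul x a) = qmul (qmul y x) c.
  by rewrite qmul_flipr qmul_assoc_sign qflipK.
have -> : qmul (qmul a x) y = qmul c (qmul x y).
  by rewrite qmul_flipl qmul_assoc_sign assoc_sign_rev.
by rewrite -(LpE _ c) -(RpE _ c) !permK.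
Qed.

Lemma Inn_lE (n : nat) : Inn_l n = <<[set Lxy x y | x : Q n, y : Q n]>>.
Proof. exact: (inn_left_gen (@LpE n) (@qmul1x n) (@qmulx1 n)). Qed.

Lemma Inn_rE (n : nat) : Inn_r n = <<[set Rxy x y | x : Q n, y : Q n]>>.
Proof. exact: (inn_right_gen (@RpE n) (@qmul1x n) (@qmulx1 n)). Qed.

Lemma InnE (n : nat) :
  Inn n = <<[set Tp x | x : Q n] :|: [set Lxy x y | x : Q n, y : Q n]
            :|: [set Rxy x y | x : Q n, y : Q n]>>.
Proof. exact: (inn_gen (@LpE n) (@RpE n) (@qmul1x n) (@qmulx1 n)). Qed.

Theorem mainTheorem12 (n : nat) :
  Inn_l n = Inn_r n /\
  Inn n = <<[set Tp x | x : Q n] :|: [set Lxy x y | x : Q n, y : Q n]>>%g.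
Proof.
have Rxy_set : [set Rxy x y | x : Q n, y : Q n] = [set Lxy x y | x : Q n, y : Q n].
  by apply: eq_in_imset2 => x y _ _; rewrite Lxy_Rxy.
split; first by rewrite Inn_lE Inn_rE Rxy_set.
by rewrite InnE Rxy_set -setUA setUid.
Qed.
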